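(* Let $(u^{(\tau)},v^{(\tau)})$ be a time-splitting solution with mesh $\tau>0$. For all integers $j_1$ and $0\le n_0\le n\le n_1$, $$\sum_{j=j_1-n_1+n}^{j_1+n_1-n}\big(|u_j^n|^2+|v_j^n|^2\big)\le\sum_{j=j_1-n_1+n_0}^{j_1+n_1-n_0}\big(|u_j^{n_0}|^2+|v_j^{n_0}|^2\big),$$ and $$\sum_{k=0}^{n_1-n_0}|u_{j_1+k}^{n_1-k}|^2+\sum_{k=0}^{n_1-n_0}|v_{j_1-k}^{n_1-k}|^2\le\sum_{j=j_1-n_1+n_0}^{j_1+n_1-n_0}\big(|u_j^{n_0}|^2+|v_j^{n_0}|^2\big).$$
   Context: Fix constants $m\ge 0$ and $\alpha,\beta\in\mathbb{R}$. Let (N) denote the ODE system on $\mathbb{C}^2$: $\frac{du}{ds}=imv+i\alpha u|v|^2+2i\beta(\bar u v+u\bar v)v$, $\frac{dv}{ds}=imu+i\alpha v|u|^2+2i\beta(\bar u v+u\bar v)u$. Time-splitting scheme with mesh $\tau>0$: given $(u_j^0,v_j^0)_{j\in\mathbb{Z}}\subset\mathbb{C}^2$ with $\sum_j(|u_j^0|^2+|v_j^0|^2)<\infty$, set $(u^{(\tau)},v^{(\tau)})(x,0)=(u_j^0,v_j^0)$ for $x\in[j\tau,(j+1)\tau)$. Inductively, once $(u^{(\tau)},v^{(\tau)})(\cdot,n\tau)$ is defined, set for $t\in[n\tau,(n+1)\tau)$: $u^{(\tau)}(x,t)=u^{(\tau)}(x-(t-n\tau),n\tau)$, $v^{(\tau)}(x,t)=v^{(\tau)}(x+(t-n\tau),n\tau)$;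 let $(u^{(\tau)},v^{(\tau)})(x,(n+1)\tau-)$ be the left limit in $t$; and for each $x$ define $(u^{(\tau)},v^{(\tau)})(x,(n+1)\tau)$ as the value at $s=\tau$ of the solution of (N) with value $(u^{(\tau)},v^{(\tau)})(x,(n+1)\tau-)$ at $s=0$ (this is globally well defined). Notation: $(u_j^n,v_j^n)=(u^{(\tau)},v^{(\tau)})(j\tau,n\tau)$. The discrete characteristic triangle is $\Delta(j_1,n_1;n_0)=\{(j,n)\in\mathbb{Z}^2: n_0\le n\le n_1,\ j_1-n_1+n\le j\le j_1+n_1-n\}$. *)

From Stdlib Require Import Reals ZArith List.
From Coquelicot Require Import Coquelicot.
Open Scope R_scope.

Definition abs2 (z : C) : R := Cmod z ^ 2.

Definition N_rhs_u (m alpha beta : R) (u v : C) : C :=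
  (Ci * (RtoC m * v) + Ci * (RtoC alpha * u * RtoC (abs2 v))
   + RtoC 2 * Ci * RtoC beta * (Cconj u * v + u * Cconj v) * v)%C.
Definition N_rhs_v (m alpha beta : R) (u v : C) : C :=
  (Ci * (RtoC m * u) + Ci * (RtoC alpha * v * RtoC (abs2 u))
   + RtoC 2 * Ci * RtoC beta * (Cconj u * v + u * Cconj v) * u)%C.

Definition solves_N_on (m alpha beta tau : R) (P Q : R -> C) : Prop :=
  forall s, 0 <= s <= tau ->
    is_derive P s (N_rhs_u m alpha beta (P s) (Q s)) /\
    is_derive Q s (N_rhs_v m alpha beta (P s) (Q s)).

(* One step = transport (u shifts one cell to
   the right, v one cell to the left) followed by the flow of (N) for time tau. *)
Definition time_splitting (m alpha beta tau : R) (u v : nat -> Z -> C) : Prop :=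
  forall (n : nat) (j : Z), exists P Q : R -> C,
    solves_N_on m alpha beta tau P Q /\
    P 0 = u n (j - 1)%Z /\ Q 0 = v n (j + 1)%Z /\
    u (S n) j = P tau /\ v (S n) j = Q tau.

Definition l2_data (u0 v0 : Z -> C) : Prop :=
  exists M : R, forall N : nat,
    fold_right Rplus 0
      (map (fun i => abs2 (u0 (Z.of_nat i - Z.of_nat N)%Z) + abs2 (v0 (Z.of_nat i - Z.of_nat N)%Z))
           (seq 0 (2 * N + 1))) <= M.

(* zsum a b f = sum_{j=a}^{b} f j (zero if b < a). *)
Definition zsum (a b : Z) (f : Z -> R) : R :=
  fold_right Rplus 0 (map (fun i => f (a + Z.of_nat i)%Z) (seq 0 (Z.to_nat (b - a + 1)))).

(* Along (N), conj(u) u' + conj(v) v' is i times a real number, so the flow of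
   (N) preserves |u|^2 + |v|^2.  Hence every step of the scheme satisfies
   |u_j^{n+1}|^2 + |v_j^{n+1}|^2 = |u_{j-1}^n|^2 + |v_{j+1}^n|^2.  Summed over
   the cone at row n+1, this recovers the mass of the cone at row n except the
   u-mass of its two rightmost cells and the v-mass of its two leftmost cells.
   Dropping these nonnegative terms gives the first estimate; keeping the
   outermost ones and iterating down the edges of the cone gives the second. *)

From Stdlib Require Import Reals ZArith List Lra Lia.
From Coquelicot Require Import Coquelicot.
Open Scope R_scope.

Lemma abs2_ge0 (z : C) : 0 <= abs2 z.
Proof. apply pow2_ge_0. Qed.

Lemma is_derive_Re (P : R -> C) (s : R) (l : C) :
  is_derive P s l -> is_derive (fun t => Re (P t)) s (Re l).
Proof.
  intro HP. eapply filterdiff_ext_lin.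
  - apply (filterdiff_comp' P fst s _ fst HP), filterdiff_linear.
    apply (@is_linear_fst R_AbsRing R_NormedModule R_NormedModule).
  - reflexivity.
Qed.

Lemma is_derive_Im (P : R -> C) (s : R) (l : C) :
  is_derive P s l -> is_derive (fun t => Im (P t)) s (Im l).
Proof.
  intro HP. eapply filterdiff_ext_lin.
  - apply (filterdiff_comp' P snd s _ snd HP), filterdiff_linear.
    apply (@is_linear_snd R_AbsRing R_NormedModule R_NormedModule).
  - reflexivity.
Qed.

Lemma is_derive_abs2 (P : R -> C) (s : R) (l : C) :
  is_derive P s l ->
  is_derive (fun t => abs2 (P t)) s (2 * (Re (P s) * Re l + Im (P s) * Im l)).
Proof.
  intro HP.
  apply (is_derive_ext (fun t => Re (P t) ^ 2 + Im (P t) ^ 2)).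
  { intro t. symmetry. apply Cmod2_alt. }
  replace (2 * (Re (P s) * Re l + Im (P s) * Im l))
    with (INR 2 * Re l * Re (P s) ^ pred 2 + INR 2 * Im l * Im (P s) ^ pred 2)
    by (simpl; ring).
  exact (is_derive_plus _ _ _ _ _
           (is_derive_pow _ 2 _ _ (is_derive_Re _ _ _ HP))
           (is_derive_pow _ 2 _ _ (is_derive_Im _ _ _ HP))).
Qed.

Lemma N_rhs_orthogonal (m alpha beta : R) (p q : C) :
  2 * (Re p * Re (N_rhs_u m alpha beta p q) + Im p * Im (N_rhs_u m alpha beta p q))
  + 2 * (Re q * Re (N_rhs_v m alpha beta p q) + Im q * Im (N_rhs_v m alpha beta p q))
  = 0.
Proof.
  destruct p as [p1 p2], q as [q1 q2].
  unfold N_rhs_u, N_rhs_v, abs2. rewrite !Cmod2_alt. simpl. ring.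
Qed.

Lemma solves_N_on_abs2 (m alpha beta tau : R) (P Q : R -> C) :
  0 < tau -> solves_N_on m alpha beta tau P Q ->
  abs2 (P tau) + abs2 (Q tau) = abs2 (P 0) + abs2 (Q 0).
Proof.
  intros Htau HPQ. symmetry.
  apply (eq_is_derive (fun s => abs2 (P s) + abs2 (Q s))); [|exact Htau].
  intros s Hs. destruct (HPQ s Hs) as [HP HQ].
  change (@zero R_NormedModule) with 0.
  rewrite <- (N_rhs_orthogonal m alpha beta (P s) (Q s)).
  exact (is_derive_plus _ _ _ _ _ (is_derive_abs2 _ _ _ HP) (is_derive_abs2 _ _ _ HQ)).
Qed.

Lemma time_splitting_abs2_step (m alpha beta tau : R) (u v : nat -> Z -> C) :
  0 < tau -> time_splitting m alpha beta tau u v ->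
  forall n j, abs2 (u (S n) j) + abs2 (v (S n) j)
              = abs2 (u n (j - 1)%Z) + abs2 (v n (j + 1)%Z).
Proof.
  intros Htau Hts n j.
  destruct (Hts n j) as (P & Q & HPQ & HP0 & HQ0 & HPtau & HQtau).
  rewrite HPtau, HQtau, <- HP0, <- HQ0.
  exact (solves_N_on_abs2 m alpha beta tau P Q Htau HPQ).
Qed.

Definition zsumn (a : Z) (len : nat) (f : Z -> R) : R :=
  fold_right Rplus 0 (map (fun i => f (a + Z.of_nat i)%Z) (seq 0 len)).

Lemma zsum_zsumn (a b : Z) (f : Z -> R) :
  zsum a b f = zsumn a (Z.to_nat (b - a + 1)) f.
Proof. reflexivity. Qed.

Lemma zsumn_ext (a : Z) (len : nat) (f g : Z -> R) :
  (forall j, f j = g j) -> zsumn a len f = zsumn a len g.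
Proof. intro Hfg. unfold zsumn. f_equal. apply map_ext. auto. Qed.

Lemma zsumn_Sr (a : Z) (len : nat) (f : Z -> R) :
  zsumn a (S len) f = zsumn a len f + f (a + Z.of_nat len)%Z.
Proof.
  unfold zsumn. rewrite seq_S, map_app, fold_right_app. simpl.
  induction (map _ (seq 0 len)) as [|x l IH]; simpl; [ring|].
  rewrite IH. ring.
Qed.

Lemma zsumn_Sl (a : Z) (len : nat) (f : Z -> R) :
  zsumn a (S len) f = f a + zsumn (a + 1) len f.
Proof.
  induction len as [|len IH].
  - unfold zsumn. simpl. rewrite Z.add_0_r. ring.
  - rewrite zsumn_Sr, IH, zsumn_Sr.
    replace (a + Z.of_nat (S len))%Z with (a + 1 + Z.of_nat len)%Z by lia. ring.
Qed.

Lemma zsumn_add (a : Z) (len : nat) (f g : Z -> R) :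
  zsumn a len (fun j => f j + g j) = zsumn a len f + zsumn a len g.
Proof.
  induction len as [|len IH]; [unfold zsumn; simpl; ring|].
  rewrite !zsumn_Sr, IH. ring.
Qed.

Lemma zsumn_shift (a k : Z) (len : nat) (f : Z -> R) :
  zsumn a len (fun j => f (j + k)%Z) = zsumn (a + k) len f.
Proof. unfold zsumn. f_equal. apply map_ext. intro i. f_equal. lia. Qed.

Section LightCone.

Variables a b : nat -> Z -> R.
Hypothesis a_ge0 : forall n j, 0 <= a n j.
Hypothesis b_ge0 : forall n j, 0 <= b n j.
Hypothesis mass_step : forall n j, a (S n) j + b (S n) j = a n (j - 1)%Z + b n (j + 1)%Z.
Variables (j1 : Z) (n1 : nat).

Definition cone_mass (n : nat) : R :=
  zsum (j1 - Z.of_nat n1 + Z.of_nat n) (j1 + Z.of_nat n1 - Z.of_nat n)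
       (fun j => a n j + b n j).

Lemma cone_mass_zsumn (n : nat) : (n <= n1)%nat ->
  cone_mass n = zsumn (j1 - Z.of_nat n1 + Z.of_nat n) (2 * (n1 - n) + 1)
                      (fun j => a n j + b n j).
Proof. intro Hn. unfold cone_mass. rewrite zsum_zsumn. do 3 f_equal. lia. Qed.

Lemma cone_mass_step (n : nat) : (n < n1)%nat ->
  cone_mass (S n) + a n (j1 + Z.of_nat n1 - Z.of_nat n)%Z
                  + b n (j1 - Z.of_nat n1 + Z.of_nat n)%Z
  <= cone_mass n.
Proof.
  intro Hn. rewrite !cone_mass_zsumn by lia.
  set (L := (j1 - Z.of_nat n1 + Z.of_nat n)%Z).
  set (l := (2 * (n1 - S n) + 1)%nat).
  replace (2 * (n1 - n) + 1)%nat with (S (S l)) by (unfold l; lia).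
  replace (j1 - Z.of_nat n1 + Z.of_nat (S n))%Z with (L + 1)%Z by (unfold L; lia).
  replace (j1 + Z.of_nat n1 - Z.of_nat n)%Z with (L + Z.of_nat (S l))%Z
    by (unfold L, l; lia).
  assert (Hnext : zsumn (L + 1) l (fun j => a (S n) j + b (S n) j)
                  = zsumn L l (a n) + zsumn (L + 1 + 1) l (b n)).
  { rewrite (zsumn_ext _ _ _ _ (mass_step n)), zsumn_add,
      (zsumn_ext _ _ (fun j => a n (j - 1)%Z) (fun j => a n (j + -1)%Z)) by (intro; f_equal; lia).
    rewrite !zsumn_shift. replace (L + 1 + -1)%Z with L by lia. reflexivity. }
  rewrite Hnext, zsumn_add, (zsumn_Sr L (S l) (a n)), (zsumn_Sr L l (a n)),
    (zsumn_Sl L (S l) (b n)), (zsumn_Sl (L + 1) l (b n)).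
  pose proof (a_ge0 n (L + Z.of_nat l)%Z).
  pose proof (b_ge0 n (L + 1)%Z).
  lra.
Qed.

Lemma cone_mass_le (n0 n : nat) : (n0 <= n)%nat -> (n <= n1)%nat ->
  cone_mass n <= cone_mass n0.
Proof.
  induction n as [|n IH]; intros Hn0 Hn.
  - replace n0 with 0%nat by lia. lra.
  - destruct (Nat.eq_dec n0 (S n)) as [->|Hne]; [lra|].
    pose proof (cone_mass_step n ltac:(lia)).
    pose proof (a_ge0 n (j1 + Z.of_nat n1 - Z.of_nat n)%Z).
    pose proof (b_ge0 n (j1 - Z.of_nat n1 + Z.of_nat n)%Z).
    specialize (IH ltac:(lia) ltac:(lia)). lra.
Qed.

Lemma characteristic_mass_le (d : nat) : (d <= n1)%nat ->
  sum_f_R0 (fun k => a (n1 - k)%nat (j1 + Z.of_nat k)%Z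
                     + b (n1 - k)%nat (j1 - Z.of_nat k)%Z) d
  <= cone_mass (n1 - d).
Proof.
  induction d as [|d IH]; intro Hd.
  - rewrite Nat.sub_0_r, cone_mass_zsumn, Nat.sub_diag by lia.
    unfold zsumn. simpl. rewrite !Nat.sub_0_r, !Z.add_0_r, Z.sub_0_r, Z.sub_add. lra.
  - rewrite tech5. cbv beta.
    pose proof (cone_mass_step (n1 - S d) ltac:(lia)) as Hstep.
    replace (S (n1 - S d)) with (n1 - d)%nat in Hstep by lia.
    replace (j1 + Z.of_nat n1 - Z.of_nat (n1 - S d))%Z with (j1 + Z.of_nat (S d))%Z
      in Hstep by lia.
    replace (j1 - Z.of_nat n1 + Z.of_nat (n1 - S d))%Z with (j1 - Z.of_nat (S d))%Z
      in Hstep by lia.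
    specialize (IH ltac:(lia)). lra.
Qed.

End LightCone.

Theorem lemma2p3 (m alpha beta tau : R) (u v : nat -> Z -> C) :
  0 <= m -> 0 < tau ->
  l2_data (u 0%nat) (v 0%nat) ->
  time_splitting m alpha beta tau u v ->
  forall (j1 : Z) (n0 n n1 : nat), (n0 <= n)%nat -> (n <= n1)%nat ->
    zsum (j1 - Z.of_nat n1 + Z.of_nat n) (j1 + Z.of_nat n1 - Z.of_nat n)
         (fun j => abs2 (u n j) + abs2 (v n j))
    <= zsum (j1 - Z.of_nat n1 + Z.of_nat n0) (j1 + Z.of_nat n1 - Z.of_nat n0)
         (fun j => abs2 (u n0 j) + abs2 (v n0 j)) /\
    sum_f_R0 (fun k => abs2 (u (n1 - k)%nat (j1 + Z.of_nat k)%Z)) (n1 - n0)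
    + sum_f_R0 (fun k => abs2 (v (n1 - k)%nat (j1 - Z.of_nat k)%Z)) (n1 - n0)
    <= zsum (j1 - Z.of_nat n1 + Z.of_nat n0) (j1 + Z.of_nat n1 - Z.of_nat n0)
         (fun j => abs2 (u n0 j) + abs2 (v n0 j)).
Proof.
  intros _ Htau _ Hts j1 n0 n n1 Hn0 Hn1.
  set (a := fun n j => abs2 (u n j)).
  set (b := fun n j => abs2 (v n j)).
  assert (Ha : forall n j, 0 <= a n j) by (intros; apply abs2_ge0).
  assert (Hb : forall n j, 0 <= b n j) by (intros; apply abs2_ge0).
  pose proof (time_splitting_abs2_step m alpha beta tau u v Htau Hts) as Hstep.
  split.
  - exact (cone_mass_le a b Ha Hb Hstep j1 n1 n0 n Hn0 Hn1).
  - rewrite <- plus_sum.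
    pose proof (characteristic_mass_le a b Ha Hb Hstep j1 n1 (n1 - n0) ltac:(lia)) as Hchar.
    replace (n1 - (n1 - n0))%nat with n0 in Hchar by lia.
    exact Hchar.
Qed.
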